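(* For $n\ge 2$, $\mathscr{Z}^{\rm TAR}(K_n)\cong K_{1,n}$. Furthermore, $\overline{\operatorname{Z}}(K_n)=\operatorname{Z}(K_n)=n-1$ and $z_0(K_n)=\underline{z_0}(K_n)=n$.
   Context: Zero forcing on a graph $G$: starting with a set $S$ of blue vertices (others white), a blue vertex $v$ may change a white vertex $w$ to blue if $w$ is the only white neighbor of $v$. $S$ is a zero forcing set if repeated application colors all of $V(G)$ blue. $\operatorname{Z}(G)$ is the minimum size of a zero forcing set, $\overline{\operatorname{Z}}(G)$ the maximum size of a minimal (under inclusion) zero forcing set. $\mathscr{Z}^{\rm TAR}(G)$ has vertices the zero forcing sets of $G$, two adjacent iff their symmetric difference has size 1; $\mathscr{Z}^{\rm TAR}_k(G)$ is its subgraph induced by zero forcing sets of size at most $k$. $\underline{z_0}(G)$ is the least $k$ with $\mathscr{Z}^{\rm TAR}_k(G)$ connected; $z_0(G)$ is the least $k$ such that $\mathscr{Z}^{\rm TAR}_i(G)$ is connected for every $i=k,\dots,|V(G)|$. $K_{1,n}$ is the star with $n$ leaves. *)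

From Stdlib Require Import Relations.
From mathcomp Require Import all_boot.
Set Implicit Arguments. Unset Strict Implicit. Unset Printing Implicit Defensive.

Section ZF.
Variables (T : finType) (e : rel T).

(* One force: a blue vertex v changes its unique white neighbor w to blue. *)
Definition zf_step (B B' : {set T}) : Prop :=
  exists v w, [/\ v \in B, w \notin B, e v w,
     (forall u, e v u -> u \notin B -> u = w) & B' = w |: B].

Definition zero_forcing (S : {set T}) : Prop :=
  clos_refl_trans _ zf_step S [set: T].

Definition is_Z (k : nat) : Prop :=
  (exists S, zero_forcing S /\ #|S| = k) /\
  (forall S, zero_forcing S -> k <= #|S|).

Definition minimal_zf (S : {set T}) : Prop :=
  zero_forcing S /\ (forall S' : {set T}, S' \proper S -> ~ zero_forcing S').

Definition is_Zbar (k : nat) : Prop :=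
  (exists S, minimal_zf S /\ #|S| = k) /\
  (forall S, minimal_zf S -> #|S| <= k).

Definition tar_adj (S S' : {set T}) : bool := #|(S :\: S') :|: (S' :\: S)| == 1.

Definition TARvert := {S : {set T} | zero_forcing S}.

Definition TAR_connected (k : nat) : Prop :=
  (exists S, zero_forcing S /\ #|S| <= k) /\
  (forall S1 S2, zero_forcing S1 -> #|S1| <= k ->
                 zero_forcing S2 -> #|S2| <= k ->
     clos_refl_trans _ (fun A B => [/\ zero_forcing A, #|A| <= k,
                                       zero_forcing B, #|B| <= k & tar_adj A B])
                     S1 S2).

Definition is_uz0 (k : nat) : Prop :=
  TAR_connected k /\ (forall j, j < k -> ~ TAR_connected j).

Definition conn_from (k : nat) : Prop :=
  forall i, k <= i <= #|T| -> TAR_connected i.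

Definition is_z0 (k : nat) : Prop :=
  conn_from k /\ (forall j, j < k -> ~ conn_from j).

End ZF.

Definition Kn (n : nat) : rel 'I_n := fun i j => i != j.

Definition star_adj {n : nat} (x y : option 'I_n) : bool :=
  match x, y with
  | None, Some _ | Some _, None => true
  | _, _ => false
  end.

Definition TAR_iso_star (T : finType) (e : rel T) (n : nat) : Prop :=
  exists f : TARvert e -> option 'I_n,
    bijective f /\
    forall x y : TARvert e, tar_adj (sval x) (sval y) = star_adj (f x) (f y).
Arguments Kn n : clear implicits.

From mathcomp Require Import all_boot zify.
From Stdlib Require Import Relations ProofIrrelevance.
Set Implicit Arguments. Unset Strict Implicit. Unset Printing Implicit Defensive.

(* In a complete graph every blue vertex is adjacent to every white one, so a
   force is possible only when exactly one vertex is white.  Hence the zero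
   forcing sets of K_n are V and the n sets V - {i}: the latter are minimal and
   pairwise at symmetric difference 2, while each is adjacent to V.  So the
   reconfiguration graph is a star centred at V, and its restriction to sets of
   size at most k is connected exactly when it contains V, i.e. when k >= n. *)

Section TokenAddRemove.
Variable T : finType.
Implicit Types A B : {set T}.

Lemma tar_adjC A B : tar_adj A B = tar_adj B A.
Proof. by rewrite /tar_adj setUC. Qed.

Lemma tar_adj_subset A B : A \subset B -> tar_adj A B = (#|B| == #|A|.+1).
Proof.
move=> sAB; rewrite /tar_adj (_ : A :\: B = set0) ?set0U; last by apply/eqP; rewrite setD_eq0.
by rewrite cardsDS //; have := subset_leq_card sAB => leAB; apply/eqP/eqP; lia.
Qed.

Lemma tar_adj_card A B : tar_adj A B -> #|A| != #|B|.
Proof.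
have disj : (A :\: B) :&: (B :\: A) = set0.
  by apply/setP => x; rewrite !inE; case: (x \in A); case: (x \in B).
rewrite /tar_adj cardsU disj cards0 subn0 => /eqP.
by have := cardsID B A; have := cardsID A B; rewrite setIC; lia.
Qed.

End TokenAddRemove.

Lemma clos_rt_eq (A : Type) (R : relation A) :
  (forall x y, R x y -> x = y) -> forall x y, clos_refl_trans A R x y -> x = y.
Proof. by move=> Req x y; elim=> [||x' y' z _ -> _ ->] //; exact: Req. Qed.

Section ZeroForcing.
Variables (T : finType) (e : rel T).

Lemma zero_forcing_setT : zero_forcing e setT.
Proof. exact: rt_refl. Qed.

Lemma zero_forcing_first_step S :
  zero_forcing e S -> S = setT \/ exists S', zf_step e S S'.
Proof.
move=> zfS; apply clos_rt_rt1n in zfS.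
inversion zfS as [|S' ? step]; [by left | by right; exists S'].
Qed.

Lemma threshold_is_uz0 k0 :
  (forall k, TAR_connected e k <-> k0 <= k) -> is_uz0 e k0.
Proof.
move=> connE; split; first exact/connE.
by move=> j ltjk /connE; rewrite leqNgt ltjk.
Qed.

Lemma threshold_is_z0 k0 :
  (forall k, TAR_connected e k <-> k0 <= k) -> k0 <= #|T| -> is_z0 e k0.
Proof.
move=> connE lek0T; split; first by move=> i /andP[lek0i _]; exact/connE.
move=> j ltjk /(_ j); rewrite leqnn (leq_trans (ltnW ltjk) lek0T) => /(_ isT).
by move/connE; rewrite leqNgt ltjk.
Qed.

End ZeroForcing.

Definition complete_graph (T : finType) : rel T := fun x y => x != y.
Arguments complete_graph T : clear implicits.

Section CompleteGraph.
Variable T : finType.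
Hypothesis T_nontrivial : 1 < #|T|.
Notation K := (complete_graph T).
Implicit Types (S : {set T}) (i j : T).

Lemma zf_step_complete S S' : zf_step K S S' -> exists w, S = [set~ w].
Proof.
case=> v [w [vS wS _ white_nbr _]]; exists w.
apply/setP => u; rewrite !inE; apply/idP/idP => [uS|].
  by apply/eqP => uw; move: wS; rewrite -uw uS.
apply: contraR => uS; apply/eqP/white_nbr => //.
by apply/eqP => vu; move: uS; rewrite -vu vS.
Qed.

Lemma zero_forcing_setC1 i : zero_forcing K [set~ i].
Proof.
have /card_gt0P[v] : 0 < #|[set~ i]| by rewrite cardsC1 -ltnS prednK // ltnW.
rewrite !inE => vi; apply: rt_step; exists v, i; split; rewrite ?inE ?eqxx //.
- by move=> u _; rewrite !inE negbK => /eqP.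
- by apply/setP => x; rewrite !inE; case: eqP.
Qed.

Lemma zero_forcing_completeP S :
  zero_forcing K S <-> S = setT \/ exists i, S = [set~ i].
Proof.
split=> [/zero_forcing_first_step [->|[S' /zf_step_complete]]|[->|[i ->]]].
- by left.
- by right.
- exact: zero_forcing_setT.
- exact: zero_forcing_setC1.
Qed.

Lemma zero_forcing_complete_card S : zero_forcing K S -> #|T|.-1 <= #|S|.
Proof. by case/zero_forcing_completeP => [->|[i ->]]; rewrite ?cardsT ?cardsC1 ?leq_pred. Qed.

Lemma zero_forcing_small S :
  zero_forcing K S -> #|S| < #|T| -> exists i, S = [set~ i].
Proof. by case/zero_forcing_completeP => [->|//]; rewrite cardsT ltnn. Qed.

Lemma tar_adj_setT_setC1 i : tar_adj [set: T] [set~ i].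
Proof.
by rewrite tar_adjC tar_adj_subset ?subsetT // cardsT cardsC1 prednK // ltnW.
Qed.

Lemma tar_adj_setC1 i j : tar_adj [set~ i] [set~ j] = false.
Proof. by apply/negP => /tar_adj_card; rewrite !cardsC1 eqxx. Qed.

Lemma TAR_connected_complete_card k : TAR_connected K k -> #|T| <= k.
Proof.
case=> [[S [zfS leSk]] connected].
have leTk := leq_trans (zero_forcing_complete_card zfS) leSk.
rewrite leqNgt; apply/negP => ltkT.
have no_edge A B :
    [/\ zero_forcing K A, #|A| <= k, zero_forcing K B, #|B| <= k & tar_adj A B] ->
    A = B.
  case=> zfA leAk zfB leBk.
  have [a ->] := zero_forcing_small zfA (leq_ltn_trans leAk ltkT).
  have [b ->] := zero_forcing_small zfB (leq_ltn_trans leBk ltkT).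
  by rewrite tar_adj_setC1.
have leC1k (l : T) : #|[set~ l]| <= k by rewrite cardsC1.
have [i [j [_ _ /eqP]]] := card_gt1P T_nontrivial; apply; apply/set1_inj/setC_inj.
exact: clos_rt_eq no_edge _ _
  (connected _ _ (zero_forcing_setC1 i) (leC1k i) (zero_forcing_setC1 j) (leC1k j)).
Qed.

Lemma TAR_connected_complete k : #|T| <= k -> TAR_connected K k.
Proof.
move=> leTk; split; first by exists setT; rewrite cardsT; split=> //; exact: zero_forcing_setT.
have leTk' : #|[set: T]| <= k by rewrite cardsT.
move=> S1 S2 zf1 le1 zf2 le2; apply: (@rt_trans _ _ _ setT).
- case/zero_forcing_completeP: zf1 le1 => [->|[i ->]] le1; first exact: rt_refl.
  apply: rt_step; split=> //; first exact: zero_forcing_setC1.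
    exact: zero_forcing_setT.
  by rewrite tar_adjC tar_adj_setT_setC1.
- case/zero_forcing_completeP: zf2 le2 => [->|[i ->]] le2; first exact: rt_refl.
  apply: rt_step; split=> //; first exact: zero_forcing_setT.
    exact: zero_forcing_setC1.
  exact: tar_adj_setT_setC1.
Qed.

Lemma minimal_zf_complete S : minimal_zf K S <-> exists i, S = [set~ i].
Proof.
split=> [[zfS minS] | [i ->]].
  case/zero_forcing_completeP: zfS minS => [-> minS|//].
  have [i _] := card_gt0P (ltnW T_nontrivial).
  case: (minS [set~ i]); last exact: zero_forcing_setC1.
  by rewrite properT; apply/eqP => /setP/(_ i); rewrite !inE eqxx.
split=> [|S' /proper_card]; first exact: zero_forcing_setC1.
by rewrite cardsC1 => ltS'; move/zero_forcing_complete_card; rewrite leqNgt ltS'.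
Qed.

Lemma is_Z_complete : is_Z K #|T|.-1.
Proof.
have [i _] := card_gt0P (ltnW T_nontrivial).
split=> [|S]; last exact: zero_forcing_complete_card.
by exists [set~ i]; rewrite cardsC1; split=> //; exact: zero_forcing_setC1.
Qed.

Lemma is_Zbar_complete : is_Zbar K #|T|.-1.
Proof.
have [i _] := card_gt0P (ltnW T_nontrivial).
split=> [|S /minimal_zf_complete [j ->]]; last by rewrite cardsC1.
by exists [set~ i]; rewrite cardsC1; split=> //; apply/minimal_zf_complete; exists i.
Qed.

Definition TARvert_of_option (a : option T) : TARvert K :=
  if a is Some i then exist _ [set~ i] (zero_forcing_setC1 i)
  else exist _ setT (zero_forcing_setT K).

Definition option_of_TARvert (x : TARvert K) : option T := [pick i in ~: sval x].

Lemma TARvert_of_optionK : cancel TARvert_of_option option_of_TARvert.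
Proof.
rewrite /option_of_TARvert => -[i|] /=; case: pickP => [j|]; rewrite ?setCK ?setCT ?inE //.
- by move/eqP->.
- by move/(_ i); rewrite inE eqxx.
Qed.

Lemma option_of_TARvertK : cancel option_of_TARvert TARvert_of_option.
Proof.
move=> x; apply: eq_sig_hprop => [? ? ?|]; first exact: proof_irrelevance.
have [a Ex] : exists a, sval x = sval (TARvert_of_option a).
  by case/zero_forcing_completeP: (svalP x) => [->|[i ->]]; [exists None | exists (Some i)].
have -> : option_of_TARvert x = a by rewrite -[RHS]TARvert_of_optionK /option_of_TARvert Ex.
by rewrite Ex.
Qed.

Lemma tar_adj_TARvert_of_option a b :
  tar_adj (sval (TARvert_of_option a)) (sval (TARvert_of_option b)) = isSome a (+) isSome b.
Proof.
case: a b => [i|] [j|] /=.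
- exact: tar_adj_setC1.
- by rewrite tar_adjC tar_adj_setT_setC1.
- exact: tar_adj_setT_setC1.
- by apply/negP => /tar_adj_card; rewrite eqxx.
Qed.

End CompleteGraph.

Lemma star_adjE n (a b : option 'I_n) : star_adj a b = isSome a (+) isSome b.
Proof. by case: a b => [?|] [?|]. Qed.

Lemma TAR_iso_star_complete n : 1 < n -> TAR_iso_star (complete_graph 'I_n) n.
Proof.
move=> n_gt1; have nontrivial : 1 < #|'I_n| by rewrite card_ord.
exists (option_of_TARvert (T := 'I_n)); split.
  exists (TARvert_of_option nontrivial); first exact: option_of_TARvertK.
  exact: TARvert_of_optionK.
move=> x y; rewrite -(option_of_TARvertK nontrivial x) -(option_of_TARvertK nontrivial y).
by rewrite tar_adj_TARvert_of_option star_adjE !TARvert_of_optionK.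
Qed.

Theorem proposition1p4 (n : nat) (hn : 2 <= n) :
  TAR_iso_star (Kn n) n /\
  is_Zbar (Kn n) (n - 1) /\ is_Z (Kn n) (n - 1) /\
  is_z0 (Kn n) n /\ is_uz0 (Kn n) n.
Proof.
have nontrivial : 1 < #|'I_n| by rewrite card_ord.
have connE k : TAR_connected (Kn n) k <-> n <= k.
  rewrite -[X in X <= k]card_ord.
  by split; [exact: TAR_connected_complete_card | exact: TAR_connected_complete].
have := is_Zbar_complete nontrivial; have := is_Z_complete nontrivial.
rewrite card_ord subn1 => isZ isZbar.
split; first exact: TAR_iso_star_complete.
split; first exact: isZbar.
split; first exact: isZ.
split; last exact: threshold_is_uz0.
by apply: threshold_is_z0; rewrite ?card_ord.
Qed.
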